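(* Let $\rho>0$ and assume $\Gamma(0)<\Gamma(1)$ and $1+\rho\ln\mu(0)>0$. Then for every $\rho$-admissible scaling $n\mapsto L_n$, \[ \lim_{n\to\infty}\mathbb{E}[I_n(L_n)]=\begin{cases}\infty&\text{if } 1+\rho\ln\Gamma(0)<0,\\ 0&\text{if } 1+\rho\ln\Gamma(0)>0.\end{cases} \]
   Context: Homogeneous binary MAG model. Fix $\mu(0),\mu(1)\in(0,1)$ with $\mu(0)+\mu(1)=1$, and a symmetric $2\times2$ matrix $(q(a,b))$ with $q(0,1)=q(1,0)$ and $0<q(a,b)<1$. On a probability space, $\{A,A_\ell(u):\ell,u\ge1\}$ are i.i.d. $\{0,1\}$-valued with $\mathbb{P}[A=1]=\mu(1)$, independent of i.i.d. uniform$(0,1)$ variables $\{U(u,v):1\le u<v\}$, $U(v,u)=U(u,v)$. With $\mathbf A_L(u)=(A_1(u),\dots,A_L(u))$ and $Q_L(\mathbf a,\mathbf b)=\prod_{\ell=1}^Lq(a_\ell,b_\ell)$, the graph $\mathbb{M}(n;L)$ on $\{1,\dots,n\}$ has an edge between distinct $u,v$ iff $U(u,v)\le Q_L(\mathbf A_L(u),\mathbf A_L(v))$. $I_n(L)$ denotes the number of isolated nodes (nodes with no neighbor) in $\mathbb{M}(n;L)$. $\Gamma(a)=\mathbb{E}[q(a,A)]$. A scaling $n\mapsto L_n$ of positive integers is $\rho$-admissible if $L_n\sim\rho\ln n$. *)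

From HB Require Import structures.
From mathcomp Require Import all_boot all_order all_algebra.
From mathcomp Require Import all_classical all_reals.
From mathcomp Require Import topology normedtype sequences exp.
Set Implicit Arguments. Unset Strict Implicit. Unset Printing Implicit Defensive.
Import Order.TTheory GRing.Theory Num.Theory.
Import numFieldNormedType.Exports.
Local Open Scope classical_set_scope.
Local Open Scope ring_scope.

Section MAG.
Variable R : realType.

(* mu b = P[A = b]; parametrized by p1 = mu(1), so mu(0) + mu(1) = 1. *)
Definition mu (p1 : R) (b : bool) : R := if b then p1 else 1 - p1.

Definition Gamma (p1 : R) (q : bool -> bool -> R) (a : bool) : R :=
  mu p1 false * q a false + mu p1 true * q a true.

Definition QL (q : bool -> bool -> R) (L : nat) (x y : {ffun 'I_L -> bool}) : R :=
  \prod_(l < L) q (x l) (y l).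

Definition attr_conf (n L : nat) := {ffun 'I_n -> {ffun 'I_L -> bool}}.
(* A graph on 'I_n: g (u, v) for u < v says whether {u, v} is an edge
   (entries with ~~ (u < v) carry zero probability unless false). *)
Definition graph_conf (n : nat) := {ffun 'I_n * 'I_n -> bool}.

Definition w_attr (p1 : R) (n L : nat) (a : attr_conf n L) : R :=
  \prod_(u < n) \prod_(l < L) mu p1 (a u l).

(* conditional probability of the graph given the attributes:
   edges {u,v} are independent, present with probability Q_L(A(u),A(v))
   (= P[U(u,v) <= Q_L(A(u),A(v))] for U(u,v) uniform on (0,1)). *)
Definition w_graph (q : bool -> bool -> R) (n L : nat) (a : attr_conf n L)
    (g : graph_conf n) : R :=
  \prod_(uv : 'I_n * 'I_n)
    if (uv.1 < uv.2)%N then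
      (if g uv then QL q (a uv.1) (a uv.2) else 1 - QL q (a uv.1) (a uv.2))
    else (if g uv then 0 else 1).

Definition adj (n : nat) (g : graph_conf n) (u v : 'I_n) : bool :=
  if (u < v)%N then g (u, v) else if (v < u)%N then g (v, u) else false.

Definition isolated_count (n : nat) (g : graph_conf n) : nat :=
  #|[set u : 'I_n | [forall v : 'I_n, ~~ adj g u v]]|.

Definition expected_isolated (p1 : R) (q : bool -> bool -> R) (n L : nat) : R :=
  \sum_(a : attr_conf n L) \sum_(g : graph_conf n)
     w_attr p1 a * w_graph q a g * (isolated_count g)%:R.

Definition admissible (rho : R) (Ln : nat -> nat) : Prop :=
  (forall n, (0 < Ln n)%N) /\
  ((fun n => (Ln n)%:R / (rho * ln (n%:R : R))) @ \oo --> (1 : R)).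

End MAG.

From HB Require Import structures.
From mathcomp Require Import all_boot all_order all_algebra.
From mathcomp Require Import all_classical all_reals.
From mathcomp Require Import topology normedtype sequences exp.
From mathcomp Require Import ring lra zify.
Import Order.TTheory GRing.Theory Num.Theory.
Import numFieldNormedType.Exports.
Local Open Scope classical_set_scope.
Local Open Scope ring_scope.
Set Implicit Arguments. Unset Strict Implicit. Unset Printing Implicit Defensive.

(* Averaging over the attributes, a node with attribute vector x is adjacent
   to any other given node with probability Gamma(x) = prod_l Gamma(x_l), and
   these events are independent given x; hence
   E[I_n(L)] = n sum_x P[A_L = x] (1 - Gamma(x))^(n-1).  As Gamma(0) < Gamma(1),
   Gamma(x) >= Gamma(0)^L with equality at the all-zero vector, so
     n mu(0)^L (1 - Gamma(0)^L)^(n-1) <= E[I_n(L)] <= n (1 - Gamma(0)^L)^(n-1).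
   Along a rho-admissible scaling n y^(L_n) = n^(1 + rho ln y + o(1)).  If
   1 + rho ln Gamma(0) < 0 then n Gamma(0)^L -> 0, so by Bernoulli's inequality
   the lower bound behaves like n mu(0)^L -> oo; if 1 + rho ln Gamma(0) > 0 then
   n Gamma(0)^L >= n^d for some d > 0 and the upper bound is at most
   n exp(-n^d / 2) -> 0. *)

Section IncidentPairs.
Variables (T : Type) (idx : T) (op : Monoid.com_law idx) (n : nat) (u : 'I_n).

Definition incident (ij : 'I_n * 'I_n) : bool :=
  (ij.1 < ij.2)%N && ((ij.1 == u) || (ij.2 == u)).

Lemma big_incident (F : 'I_n -> 'I_n -> T) : (forall i j, F i j = F j i) ->
  \big[op/idx]_(ij | incident ij) F ij.1 ij.2 = \big[op/idx]_(v | v != u) F u v.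
Proof.
move=> Fsym; pose pair_at (v : 'I_n) := if (u < v)%N then (u, v) else (v, u).
rewrite (reindex_onto pair_at (fun ij => if ij.1 == u then ij.2 else ij.1)) /=.
  apply: eq_big => v; rewrite /pair_at /incident.
    have [->|vu] := eqVneq v u; first by rewrite ltnn /= ltnn.
    case: (ltngtP u v) => [uv|vu'|/val_inj uv] /=; rewrite ?(negbTE vu) /= ?eqxx ?orbT ?andbT //.
    by move: vu; rewrite uv eqxx.
  by move=> _; case: ltnP; rewrite // Fsym.
move=> [i j] /andP[/= ij /orP[/eqP iu|/eqP ju]]; rewrite /pair_at /=.
  by rewrite iu eqxx -iu ij.
have iu : i != u by rewrite -ju neq_ltn ij.
by rewrite (negbTE iu) -ju ltnNge (ltnW ij).
Qed.
End IncidentPairs.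

Section Asymptotics.
Variable R : realType.

Lemma one_sub_pow_ge (t : R) k : 0 <= t <= 1 -> 1 - k%:R * t <= (1 - t) ^+ k.
Proof.
case/andP => t0 t1; elim: k => [|k IH]; first by rewrite mul0r subr0 expr0.
have pow_ge0 : 0 <= (1 - t) ^+ k by apply: exprn_ge0; lra.
have k_ge0 : 0 <= k%:R :> R by [].
rewrite exprS -natr1; nra.
Qed.

Lemma one_sub_pow_le_expR (t : R) k : t <= 1 -> (1 - t) ^+ k <= expR (- (k%:R * t)).
Proof.
move=> t1; rewrite -mulrN expRM_natl; apply: lerXn2r; rewrite ?nnegrE ?expR_ge0 //.
  by rewrite subr_ge0.
by rewrite -[1 - t]/(1 + - t) expR_ge1Dx.
Qed.

Lemma ln_natr_cvgy : ln (n%:R : R) @[n --> \oo] --> +oo.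
Proof.
apply/cvgryPge => A; near=> n.
have expA_le : expR A <= n%:R by near: n; exact: nbhs_infty_ger.
rewrite -ler_expR lnK // posrE; exact: lt_le_trans (expR_gt0 A) expA_le.
Unshelve. all: by end_near.
Qed.

Lemma expR_mul_ln_cvgy (d : R) : 0 < d -> expR (d * ln n%:R) @[n --> \oo] --> +oo.
Proof.
move=> d_gt0; apply/cvgryPge => A.
have /cvgryPge/(_ (A / d)) := ln_natr_cvgy; apply: filterS => n.
rewrite ler_pdivrMr // => Ale; apply: le_trans (expR_ge1Dx _); lra.
Qed.

Lemma expR_mul_ln_cvg0 (d : R) : d < 0 -> expR (d * ln n%:R) @[n --> \oo] --> 0.
Proof.
move=> d_lt0; pose f n := expR (- d * ln (n%:R : R)).
have f_gt0 : \forall n \near \oo, 0 < f n by apply: nearW => n; exact: expR_gt0.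
have f_cvgy : f n @[n --> \oo] --> +oo by apply: expR_mul_ln_cvgy; rewrite oppr_gt0.
suff -> : (fun n => expR (d * ln (n%:R : R))) = (fun n => (f n)^-1).
  exact: (gtr0_cvgV0 f_gt0).2 f_cvgy.
by apply/funext => n; rewrite /f -expRN mulNr opprK.
Qed.

Lemma mul_one_sub_pow_cvgy (s t : nat -> R) :
  (\forall n \near \oo, 0 <= t n <= 1) -> s n @[n --> \oo] --> +oo ->
  n%:R * t n @[n --> \oo] --> 0 ->
  s n * (1 - t n) ^+ n.-1 @[n --> \oo] --> +oo.
Proof.
move=> t01 /cvgryPge s_large /cvgrPdist_le/(_ 2^-1) nt_small; apply/cvgryPge => A.
near=> n.
have s_ge : 2 * `|A| <= s n by near: n; exact: s_large.
have tn01 : 0 <= t n <= 1 by near: n.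
have : `|0 - n%:R * t n| <= 2^-1 by near: n; apply: nt_small; rewrite invr_gt0.
rewrite sub0r normrN => /ler_normlP[_ nt_le].
have pred_t_le : (n.-1)%:R * t n <= 2^-1.
  by apply: le_trans nt_le; rewrite ler_wpM2r ?ler_nat ?leq_pred //; case/andP: tn01.
have s_ge0 : 0 <= s n by apply: le_trans s_ge; rewrite mulr_ge0.
apply: le_trans (ler_wpM2l s_ge0 (one_sub_pow_ge n.-1 tn01)).
have := ler_wpM2l s_ge0 pred_t_le; have := ler_norm A; lra.
Unshelve. all: by end_near.
Qed.

Lemma mul_one_sub_pow_cvg0 (t : nat -> R) (d : R) : 0 < d ->
  (\forall n \near \oo, 0 <= t n <= 1) ->
  (\forall n \near \oo, expR (d * ln n%:R) <= n%:R * t n) ->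
  n%:R * (1 - t n) ^+ n.-1 @[n --> \oo] --> 0.
Proof.
move=> d_gt0 t01 nt_large.
(* Eventually (n - 1) t n >= expR (d ln n) / 2 >= (d ln n)^2 / 4 >= 2 ln n, so
   n (1 - t n)^(n-1) <= expR (ln n - (n - 1) t n) <= 1 / n. *)
apply: squeeze_cvgr (cvg_cst 0) (expR_mul_ln_cvg0 (_ : -1 < 0)); last by rewrite oppr_lt0.
have /cvgryPge/(_ (8 / d ^+ 2)) ln_large := ln_natr_cvgy.
near=> n.
have n_ge2 : (2 <= n)%N by near: n; exact: nbhs_infty_ge.
have /andP[t0 t1] : 0 <= t n <= 1 by near: n.
have nt_ge : expR (d * ln n%:R) <= n%:R * t n by near: n.
have : 8 / d ^+ 2 <= ln (n%:R : R) by near: n.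
rewrite ler_pdivrMr ?exprn_gt0 // => l_ge.
have n_gt0 : 0 < n%:R :> R by rewrite ltr0n; lia.
have n_le : n%:R <= 2 * (n.-1)%:R :> R by rewrite -[2]/(2%:R) -natrM ler_nat; lia.
have dl_ge0 : 0 <= d * ln (n%:R : R) by apply: mulr_ge0; nra.
have := expR_ge1Dxn 1 dl_ge0; rewrite (_ : 2`!%:R = 2) // => exp_ge.
have ln_ge0 : 0 <= ln (n%:R : R) by rewrite ln_ge0 // ler1n; lia.
have sq_ge : 8 * ln (n%:R : R) <= (d * ln n%:R) ^+ 2 by nra.
have pred_nt_ge : n%:R * t n <= 2 * ((n.-1)%:R * t n) by rewrite mulrA ler_wpM2r.
apply/andP; split; first by rewrite mulr_ge0 // exprn_ge0 // subr_ge0.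
apply: le_trans (ler_wpM2l (ler0n _ _) (one_sub_pow_le_expR n.-1 t1)) _.
rewrite -{1}(@lnK _ n%:R) ?posrE // -expRD ler_expR; lra.
Unshelve. all: by end_near.
Qed.
End Asymptotics.

Section Admissible.
Variable R : realType.

Lemma admissible_ln_dev (rho e : R) Ln : 0 < rho -> 0 < e -> admissible rho Ln ->
  \forall n \near \oo, `|(Ln n)%:R - rho * ln n%:R| <= e * ln (n%:R : R).
Proof.
move=> rho_gt0 e_gt0 [_ /cvgrPdist_le /(_ (e / rho)) ratio_near].
have /cvgryPge/(_ 1) ln_ge1 := @ln_natr_cvgy R.
near=> n.
have l_ge1 : 1 <= ln (n%:R : R) by near: n.
have ratio_le : `|1 - (Ln n)%:R / (rho * ln n%:R)| <= e / rho.
  by near: n; apply: ratio_near; exact: divr_gt0.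
have rl_gt0 : 0 < rho * ln (n%:R : R) by apply: mulr_gt0 => //; lra.
have -> : (Ln n)%:R - rho * ln n%:R = rho * ln n%:R * ((Ln n)%:R / (rho * ln n%:R) - 1).
  by field; rewrite !gt_eqF //; lra.
rewrite normrM gtr0_norm // distrC.
apply: le_trans (ler_wpM2l (ltW rl_gt0) ratio_le) _.
by rewrite mulrC mulrA divfK ?gt_eqF.
Unshelve. all: by end_near.
Qed.

Lemma admissible_mul_pow_bounds (rho y e : R) Ln :
  0 < rho -> 0 < y < 1 -> 0 < e -> admissible rho Ln ->
  \forall n \near \oo, expR ((1 + rho * ln y - e) * ln n%:R) <= n%:R * y ^+ Ln n
                        <= expR ((1 + rho * ln y + e) * ln n%:R).
Proof.
move=> rho_gt0 y01 e_gt0 adm; have lny_lt0 := ln_lt0 y01.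
have y_gt0 : 0 < y by case/andP: y01.
near=> n.
have n_gt0 : 0 < n%:R :> R by rewrite ltr0n; near: n; exact: nbhs_infty_ge.
have dev : `|(Ln n)%:R - rho * ln n%:R| * - ln y <= e * ln (n%:R : R).
  rewrite -ler_pdivlMr ?oppr_gt0 // mulrAC.
  by near: n; apply: admissible_ln_dev => //; rewrite divr_gt0 ?oppr_gt0.
move: dev; rewrite -[- ln y]gtr0_norm ?oppr_gt0 // -normrM ler_norml => /andP[lo hi].
have -> : n%:R * y ^+ Ln n = expR (ln n%:R + (Ln n)%:R * ln y).
  by rewrite expRD expRM_natl !lnK ?posrE.
rewrite !ler_expR.
apply/andP; split; nra.
Unshelve. all: by end_near.
Qed.

Lemma admissible_mul_pow_cvgy (rho y : R) Ln :
  0 < rho -> 0 < y < 1 -> admissible rho Ln -> 0 < 1 + rho * ln y ->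
  n%:R * y ^+ Ln n @[n --> \oo] --> +oo.
Proof.
move=> rho_gt0 y01 adm c_gt0; set c := 1 + rho * ln y.
have c2_gt0 : 0 < c / 2 by rewrite divr_gt0.
apply: ger_cvgy (expR_mul_ln_cvgy c2_gt0).
apply: filterS (admissible_mul_pow_bounds rho_gt0 y01 c2_gt0 adm) => n /andP[+ _].
by rewrite (_ : c - c / 2 = c / 2) //; field.
Qed.

Lemma admissible_mul_pow_cvg0 (rho y : R) Ln :
  0 < rho -> 0 < y < 1 -> admissible rho Ln -> 1 + rho * ln y < 0 ->
  n%:R * y ^+ Ln n @[n --> \oo] --> 0.
Proof.
move=> rho_gt0 y01 adm c_lt0; set c := 1 + rho * ln y.
have c2_gt0 : 0 < - c / 2 by rewrite divr_gt0 ?oppr_gt0.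
have y_ge0 : 0 <= y by case/andP: y01 => /ltW.
apply: squeeze_cvgr (cvg_cst 0) (expR_mul_ln_cvg0 (_ : c / 2 < 0)); last first.
  by rewrite -oppr_gt0 -mulNr.
apply: filterS (admissible_mul_pow_bounds rho_gt0 y01 c2_gt0 adm) => n /andP[_ +].
by rewrite mulr_ge0 ?exprn_ge0 //= (_ : c + - c / 2 = c / 2) //; field.
Qed.
End Admissible.

Section ExpectedIsolated.
Variables (R : realType) (p1 : R) (q : bool -> bool -> R).

Definition attr_weight L (x : {ffun 'I_L -> bool}) : R := \prod_(l < L) mu p1 (x l).

Definition link_prob L (x : {ffun 'I_L -> bool}) : R := \prod_(l < L) Gamma p1 q (x l).

Lemma sum_attr_weight L : \sum_(y : {ffun 'I_L -> bool}) attr_weight y = 1.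
Proof.
rewrite /attr_weight -(bigA_distr_bigA (fun _ => mu p1)).
by rewrite big1 // => l _; rewrite big_bool /= /mu subrKC.
Qed.

Lemma sum_attr_weight_QL L (x : {ffun 'I_L -> bool}) :
  \sum_y attr_weight y * QL q x y = link_prob x.
Proof.
under eq_bigr do rewrite /attr_weight /QL -big_split /=.
rewrite -(bigA_distr_bigA (fun l b => mu p1 b * q (x l) b)).
by apply: eq_bigr => l _; rewrite big_bool /Gamma addrC.
Qed.

Definition isolated n (g : graph_conf n) (u : 'I_n) := [forall v, ~~ adj g u v].

Lemma isolated_countE n (g : graph_conf n) :
  (isolated_count g)%:R = \sum_u (isolated g u)%:R :> R.
Proof.
rewrite /isolated_count -sum1_card natr_sum big_mkcond /=.
apply: eq_bigr => u _; case: (boolP (isolated g u)) => iso; first by rewrite mem_set.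
by rewrite memNset //; apply/negP.
Qed.

Lemma isolatedE n (g : graph_conf n) (u : 'I_n) :
  (isolated g u)%:R = \prod_(ij | incident u ij) (~~ g ij)%:R :> R.
Proof.
case: (boolP (isolated g u)) => [/forallP iso | /forallPn [v]].
  apply/esym/big1 => [[i j]] /andP[/= ij /orP[/eqP iu|/eqP ju]].
    by move: (iso j); rewrite /adj -iu ij => /negbTE ->.
  by move: (iso i); rewrite /adj -ju ij ltnNge (ltnW ij) => /negbTE ->.
rewrite negbK /adj; case: (ltngtP u v) => // uv guv.
  by rewrite (bigD1 (u, v)) /incident /= ?uv ?eqxx // guv mul0r.
by rewrite (bigD1 (v, u)) /incident /= ?uv ?eqxx ?orbT // guv mul0r.
Qed.

Lemma QLC L : (forall b c, q b c = q c b) ->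
  forall x y : {ffun 'I_L -> bool}, QL q x y = QL q y x.
Proof. by move=> qC x y; apply: eq_bigr => l _; rewrite qC. Qed.

Lemma sum_graph_isolated n L (a : attr_conf n L) (u : 'I_n) :
  (forall b c, q b c = q c b) ->
  \sum_(g : graph_conf n) w_graph q a g * (isolated g u)%:R
  = \prod_(v | v != u) (1 - QL q (a u) (a v)).
Proof.
move=> qC; pose edge_weight (ij : 'I_n * 'I_n) (b : bool) :=
  if (ij.1 < ij.2)%N then (if b then QL q (a ij.1) (a ij.2) else 1 - QL q (a ij.1) (a ij.2))
  else (if b then 0 else 1).
pose h ij b := edge_weight ij b * (if incident u ij then (~~ b)%:R else 1).
(* Both factors are products over pairs, so the sum over graphs is a product of
   sums over each pair, which equal 1 for pairs not incident to u. *)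
transitivity (\sum_(g : graph_conf n) \prod_ij h ij (g ij)).
  by apply: eq_bigr => g _; rewrite isolatedE big_mkcond -big_split.
rewrite -(bigA_distr_bigA h).
rewrite -(@big_incident _ _ _ _ u (fun i j => 1 - QL q (a i) (a j))); last first.
  by move=> i j; rewrite QLC.
rewrite [RHS]big_mkcond; apply: eq_bigr => -[i j] _.
rewrite big_bool /h /edge_weight /incident /=.
by case: (i < j)%N; case: (_ || _); rewrite /= ?(mulr1, mulr0, mul0r, add0r, addr0, subrKC).
Qed.

Lemma sum_attr_isolated n L (u : 'I_n) :
  \sum_(a : attr_conf n L) w_attr p1 a * \prod_(v | v != u) (1 - QL q (a u) (a v))
  = \sum_(x : {ffun 'I_L -> bool}) attr_weight x * (1 - link_prob x) ^+ n.-1.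
Proof.
(* Only x = a u contributes to the sum over x defining split_at_u; this turns
   the sum over configurations into a product of independent sums over the
   attribute vector of each node. *)
pose H (x : {ffun 'I_L -> bool}) (v : 'I_n) (y : {ffun 'I_L -> bool}) : R :=
  if v == u then (if y == x then attr_weight y else 0)
                else attr_weight y * (1 - QL q x y).
have split_at_u (a : attr_conf n L) : w_attr p1 a * \prod_(v | v != u) (1 - QL q (a u) (a v))
                    = \sum_x \prod_v H x v (a v).
  rewrite [RHS](bigD1 (a u)) //= [X in _ + X]big1 ?addr0 => [|x xau]; last first.
    by rewrite (bigD1 u) //= /H eqxx eq_sym (negbTE xau) mul0r.
  rewrite [RHS](bigD1 u) //= {1}/H !eqxx /w_attr (bigD1 u) //= -mulrA -big_split /=.
  by congr (_ * _); apply: eq_bigr => v vu; rewrite /H (negbTE vu).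
under eq_bigr do rewrite split_at_u.
rewrite exchange_big /=; apply: eq_bigr => x _.
rewrite -(bigA_distr_bigA (H x)) (bigD1 u) //= {1}/H eqxx -big_mkcond big_pred1_eq.
rewrite (eq_bigr (fun _ => 1 - link_prob x)) ?prodr_const ?cardC1 ?card_ord // => v vu.
rewrite /H (negbTE vu); under eq_bigr do rewrite mulrBr mulr1.
by rewrite sumrB sum_attr_weight sum_attr_weight_QL.
Qed.

Lemma expected_isolatedE n L : (forall b c, q b c = q c b) ->
  expected_isolated p1 q n L
  = n%:R * \sum_(x : {ffun 'I_L -> bool}) attr_weight x * (1 - link_prob x) ^+ n.-1.
Proof.
move=> qC; rewrite /expected_isolated.
under eq_bigr do under eq_bigr do rewrite isolated_countE mulr_sumr.
under eq_bigr do rewrite exchange_big /=.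
rewrite exchange_big /= mulr_natl -[n in _ *+ n]card_ord -sumr_const.
apply: eq_bigr => u _; rewrite -(sum_attr_isolated L u); apply: eq_bigr => a _.
by rewrite -(sum_graph_isolated a u qC) mulr_sumr; under [RHS]eq_bigr do rewrite mulrA.
Qed.
End ExpectedIsolated.

Section IsolationBounds.
Variables (R : realType) (p1 : R) (q : bool -> bool -> R).
Hypothesis p1_01 : 0 < p1 < 1.
Hypothesis q_01 : forall a b, 0 < q a b < 1.
Hypothesis Gamma_lt : Gamma p1 q false < Gamma p1 q true.

Lemma Gamma_01 b : 0 < Gamma p1 q b < 1.
Proof.
rewrite /Gamma /mu /=; case/andP: p1_01 => ? ?.
by case/andP: (q_01 b false) => ? ?; case/andP: (q_01 b true) => ? ?; apply/andP; split; nra.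
Qed.

Lemma attr_weight_ge0 L (x : {ffun 'I_L -> bool}) : 0 <= attr_weight p1 x.
Proof. by apply: prodr_ge0 => l _; rewrite /mu; case/andP: p1_01; case: (x l); lra. Qed.

Lemma link_prob_bounds L (x : {ffun 'I_L -> bool}) :
  Gamma p1 q false ^+ L <= link_prob p1 q x <= 1.
Proof.
have G0 b : 0 <= Gamma p1 q b <= 1 by case/andP: (Gamma_01 b) => /ltW -> /ltW ->.
apply/andP; split; last by apply: prodr_ile1 => l _; exact: G0.
rewrite -[L in _ ^+ L]card_ord -prodr_const; apply: ler_prod => l _.
apply/andP; split; first by case/andP: (G0 false).
by case: (x l) => //; exact: ltW.
Qed.

Lemma expected_isolated_bounds n L : q false true = q true false ->
  n%:R * mu p1 false ^+ L * (1 - Gamma p1 q false ^+ L) ^+ n.-1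
  <= expected_isolated p1 q n L
  <= n%:R * (1 - Gamma p1 q false ^+ L) ^+ n.-1.
Proof.
move=> q_sym; rewrite expected_isolatedE; last by case; case.
have pow_le (x : {ffun 'I_L -> bool}) k :
    0 <= (1 - link_prob p1 q x) ^+ k <= (1 - Gamma p1 q false ^+ L) ^+ k.
  have /andP[lo hi] := link_prob_bounds x.
  have link_le : 0 <= 1 - link_prob p1 q x by rewrite subr_ge0.
  by rewrite exprn_ge0 //= lerXn2r ?nnegrE //; lra.
rewrite -[_ * _ * _]mulrA; apply/andP; split; apply: ler_wpM2l => //.
  pose all_false : {ffun 'I_L -> bool} := [ffun=> false].
  have weight_false : attr_weight p1 all_false = mu p1 false ^+ L.
    by rewrite /attr_weight; under eq_bigr do rewrite ffunE; rewrite prodr_const card_ord.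
  have link_false : link_prob p1 q all_false = Gamma p1 q false ^+ L.
    by rewrite /link_prob; under eq_bigr do rewrite ffunE; rewrite prodr_const card_ord.
  rewrite (bigD1 all_false) //= weight_false link_false -[X in X <= _]addr0 lerD //.
  by apply: sumr_ge0 => x _; rewrite mulr_ge0 ?attr_weight_ge0 //; case/andP: (pow_le x n.-1).
rewrite -[X in _ <= X]mul1r -[X in _ <= X * _](sum_attr_weight p1 L) mulr_suml.
apply: ler_sum => x _; apply: ler_wpM2l; first exact: attr_weight_ge0.
by case/andP: (pow_le x n.-1).
Qed.
End IsolationBounds.

Theorem proposition1 (R : realType) (p1 : R) (q : bool -> bool -> R) (rho : R)
  (Ln : nat -> nat) :
  0 < p1 < 1 ->
  q false true = q true false ->
  (forall a b, 0 < q a b < 1) ->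
  0 < rho ->
  Gamma p1 q false < Gamma p1 q true ->
  0 < 1 + rho * ln (mu p1 false) ->
  admissible rho Ln ->
  (1 + rho * ln (Gamma p1 q false) < 0 ->
     (fun n => expected_isolated p1 q n (Ln n)) @ \oo --> +oo) /\
  (0 < 1 + rho * ln (Gamma p1 q false) ->
     (fun n => expected_isolated p1 q n (Ln n)) @ \oo --> (0 : R)).
Proof.
move=> p1_01 q_sym q_01 rho_gt0 Gamma_lt mu_exp_gt0 adm.
have bounds n := expected_isolated_bounds p1_01 q_01 Gamma_lt n (Ln n) q_sym.
have G01 := Gamma_01 p1_01 q_01 false.
have mu01 : 0 < mu p1 false < 1 by case/andP: p1_01 => ? ?; apply/andP; split; rewrite /mu; lra.
have pow01 : \forall n \near \oo, 0 <= Gamma p1 q false ^+ Ln n <= 1.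
  by apply: nearW => n; case/andP: G01 => /ltW ? /ltW ?; rewrite exprn_ge0 ?exprn_ile1.
split => Gamma_exp.
- apply: ger_cvgy (mul_one_sub_pow_cvgy pow01
      (admissible_mul_pow_cvgy rho_gt0 mu01 adm mu_exp_gt0)
      (admissible_mul_pow_cvg0 rho_gt0 G01 adm Gamma_exp)).
  by apply: nearW => n; case/andP: (bounds n).
- set c := 1 + rho * ln (Gamma p1 q false); have c2_gt0 : 0 < c / 2 by rewrite divr_gt0.
  apply: (squeeze_cvgr _ (cvg_cst 0) (mul_one_sub_pow_cvg0 c2_gt0 pow01 _)).
    apply: nearW => n; have /andP[lo ->] := bounds n; rewrite andbT (le_trans _ lo) //.
    have /andP[/ltW G0 /ltW G1] := G01; have /andP[/ltW m0 _] := mu01.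
    by rewrite !mulr_ge0 // exprn_ge0 // subr_ge0 exprn_ile1.
  apply: filterS (admissible_mul_pow_bounds rho_gt0 G01 c2_gt0 adm) => n /andP[+ _].
  by rewrite (_ : c - c / 2 = c / 2) //; field.
Qed.
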